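(* Let $G=(V,E)$ be a finite simple undirected graph and let $v\in V$. Suppose $v$ is unique under anonymity-cascade with $\ell=1$, i.e., there exists a node $u\in V$ adjacent to $v$ such that (i) no node $x\in V\setminus\{u\}$ is $1$-equivalent to $u$, and (ii) no node $v'\in V(N_1(u))\setminus\{u,v\}$ is $1$-equivalent to $v$. Then $v$ is unique under $2$-$k$-anonymity, i.e., no node $w\in V\setminus\{v\}$ is $2$-equivalent to $v$.
   Context: For nodes $v,w$, the distance $d(v,w)$ is the minimum number of edges on a path from $v$ to $w$ ($\infty$ if none). For $d\ge 0$ and $v\in V$, the $d$-neighborhood $N_d(v)$ is the subgraph of $G$ induced by all nodes at distance at most $d$ from $v$ (so $N_1(v)$ is the ego network of $v$, including $v$). A graph isomorphism between $H=(V_H,E_H)$ and $H'=(V_{H'},E_{H'})$ is a bijection $\phi:V_H\to V_{H'}$ with $\{\phi(a),\phi(b)\}\in E_{H'}$ iff $\{a,b\}\in E_H$. Two nodes $v,w\in V$ are $d$-equivalent if there is an isomorphism $\phi$ from $N_d(v)$ to $N_d(w)$ with $\phi(v)=w$. A node is unique under $d$-$k$-anonymity if it is $d$-equivalent to no other node of $G$. *)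

From mathcomp Require Import all_boot.
Set Implicit Arguments. Unset Strict Implicit. Unset Printing Implicit Defensive.

(* A finite simple undirected graph is a vertex finType T with an edge
   relation e : rel T that is symmetric and irreflexive. *)

Definition within_dist (T : finType) (e : rel T) (d : nat) (v x : T) : Prop :=
  exists p : seq T, size p <= d /\ path e v p /\ last v p = x.

(* v and w are d-equivalent: a bijection phi from the vertex set of N_d(v)
   onto that of N_d(w) (induced subgraphs), preserving and reflecting
   adjacency, with phi v = w. *)
Definition d_equiv (T : finType) (e : rel T) (d : nat) (v w : T) : Prop :=
  exists phi : T -> T,
    [/\ (forall a, within_dist e d v a -> within_dist e d w (phi a)),
        (forall b, within_dist e d w b -> exists2 a, within_dist e d v a & phi a = b),
        (forall a b, within_dist e d v a -> within_dist e d v b -> phi a = phi b -> a = b),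
        phi v = w &
        (forall a b, within_dist e d v a -> within_dist e d v b ->
           e (phi a) (phi b) = e a b)].

From mathcomp Require Import all_boot zify_ssreflect.

Set Implicit Arguments.
Unset Strict Implicit.
Unset Printing Implicit Defensive.

(* An isomorphism phi of (k + d)-balls centred at w restricts to a
   d-equivalence from c to phi c for every c within distance k of w. Take phi
   a 2-equivalence from w to v: it restricts to 1-equivalences at w and at
   every neighbour of w. The neighbour u of v has a preimage u', adjacent to
   w because phi reflects adjacency; restriction makes u' 1-equivalent to u,
   hence u' = u by (i). So w lies in N_1(u) \ {u, v}, and restriction at w
   makes w 1-equivalent to v, contradicting (ii). *)

Section WithinDist.

Variables (T : finType) (e : rel T).

Lemma within_dist_refl d x : within_dist e d x x.
Proof. by exists [::]. Qed.

Lemma within_dist0 x y : within_dist e 0 x y -> x = y.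
Proof. by case=> [[|z p] [/= size_p [_ <-]]]. Qed.

Lemma within_distS d x y :
  within_dist e d.+1 x y <-> x = y \/ exists2 z, e x z & within_dist e d z y.
Proof.
split.
- case=> [[|z p] [/= size_p [xp last_p]]]; first by left.
  case/andP: xp => xz zp; right; exists z => //.
  by exists p.
- case=> [<-|[z xz [p [size_p [zp last_p]]]]]; first exact: within_dist_refl.
  by exists (z :: p); rewrite /= xz.
Qed.

Lemma within_dist_le m n x y :
  m <= n -> within_dist e m x y -> within_dist e n x y.
Proof.
move=> le_mn [p [size_p p_walk]]; exists p; split=> //.
exact: leq_trans le_mn.
Qed.

Lemma within_dist_cat m n x y z :
  within_dist e m x y -> within_dist e n y z -> within_dist e (m + n) x z.
Proof.
move=> [p [size_p [xp <-]]] [q [size_q [yq last_q]]].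
exists (p ++ q); rewrite size_cat cat_path last_cat xp yq last_q.
by split=> //; apply: leq_add.
Qed.

Lemma within_dist1_edge x y : e x y -> within_dist e 1 x y.
Proof. by move=> xy; exists [:: y]; rewrite /= xy. Qed.

Lemma within_dist_rcons k x y z :
  within_dist e k x y -> e y z -> within_dist e k.+1 x z.
Proof.
move=> xy /within_dist1_edge yz; rewrite -addn1.
exact: within_dist_cat xy yz.
Qed.

End WithinDist.

(* [d_equiv e d v w] unfolds to [exists phi, ball_iso e d v w phi]. *)
Definition ball_iso (T : finType) (e : rel T) (d : nat) (v w : T) (phi : T -> T) :=
  [/\ (forall a, within_dist e d v a -> within_dist e d w (phi a)),
      (forall b, within_dist e d w b -> exists2 a, within_dist e d v a & phi a = b),
      (forall a b, within_dist e d v a -> within_dist e d v b -> phi a = phi b -> a = b),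
      phi v = w &
      (forall a b, within_dist e d v a -> within_dist e d v b ->
         e (phi a) (phi b) = e a b)].

Section BallIsoRestriction.

Variables (T : finType) (e : rel T) (D : nat) (w v : T) (phi : T -> T).
Hypothesis phi_iso : ball_iso e D w v phi.

Lemma ball_iso_within d k c a :
  k + d <= D -> within_dist e k w c -> within_dist e d c a ->
  within_dist e d (phi c) (phi a).
Proof.
have [_ _ _ _ phi_edge] := phi_iso.
elim: d k c => [|d IHd] k c le_kdD wc.
  by move/within_dist0 <-; apply: within_dist_refl.
case/within_distS => [<-|[z cz za]]; first exact: within_dist_refl.
have wz : within_dist e k.+1 w z by apply: within_dist_rcons wc cz.
have wcD : within_dist e D w c by apply: within_dist_le wc; lia.
have wzD : within_dist e D w z by apply: within_dist_le wz; lia.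
apply/within_distS; right; exists (phi z).
- by rewrite phi_edge.
- by apply: IHd wz za; lia.
Qed.

Lemma ball_iso_onto d k c b :
  k + d <= D -> within_dist e k w c -> within_dist e d (phi c) b ->
  exists2 a, within_dist e d c a & phi a = b.
Proof.
have [_ phi_onto _ phi_w phi_edge] := phi_iso.
elim: d k c => [|d IHd] k c le_kdD wc.
  by move/within_dist0 <-; exists c; first exact: within_dist_refl.
case/within_distS => [<-|[z' cz' z'b]].
  by exists c; first exact: within_dist_refl.
have vc : within_dist e k v (phi c).
  rewrite -phi_w; apply: (ball_iso_within (k := 0)) wc => //; first lia.
  exact: within_dist_refl.
have [z wz phi_z] : exists2 z, within_dist e D w z & phi z = z'.
  by apply: phi_onto; apply: within_dist_le (within_dist_rcons vc cz'); lia.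
have cz : e c z.
  by rewrite -phi_edge ?phi_z //; apply: within_dist_le wc; lia.
have [a za phi_a] : exists2 a, within_dist e d z a & phi a = b.
  by apply: IHd (within_dist_rcons wc cz) _; [lia | rewrite phi_z].
by exists a => //; apply/within_distS; right; exists z.
Qed.

Lemma d_equiv_restrict k d c :
  k + d <= D -> within_dist e k w c -> d_equiv e d c (phi c).
Proof.
move=> le_kdD wc; have [_ _ phi_inj _ phi_edge] := phi_iso.
have inD a : within_dist e d c a -> within_dist e D w a.
  by move=> ca; apply: within_dist_le le_kdD (within_dist_cat wc ca).
exists phi; split=> //.
- by move=> a; apply: ball_iso_within le_kdD wc.
- by move=> b; apply: ball_iso_onto le_kdD wc.
- by move=> a b /inD wa /inD wb; apply: phi_inj.
- by move=> a b /inD wa /inD wb; apply: phi_edge.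
Qed.

End BallIsoRestriction.

Theorem theorem1 (T : finType) (e : rel T)
  (e_sym : symmetric e) (e_irr : irreflexive e) (v : T) :
  (exists u : T,
     [/\ e v u,
         (forall x : T, x != u -> ~ d_equiv e 1 x u) &
         (forall v' : T, within_dist e 1 u v' -> v' != u -> v' != v ->
            ~ d_equiv e 1 v' v)]) ->
  forall w : T, w != v -> ~ d_equiv e 2 w v.
Proof.
case=> u [vu u_unique v_unique] w w_neq_v [phi].
rewrite -/(ball_iso e 2 w v phi) => phi_iso.
have [_ phi_onto _ phi_w phi_edge] := phi_iso.
have [u' wu' phi_u'] : exists2 u', within_dist e 2 w u' & phi u' = u.
  by apply: phi_onto; apply: within_dist_le (within_dist1_edge vu).
have w_u' : e w u'.
  by rewrite -phi_edge ?phi_w ?phi_u' //; apply: within_dist_refl.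
have u'_eq_u : u' = u.
  have [//|u'_neq_u] := eqVneq u' u.
  case: (u_unique u' u'_neq_u); rewrite -phi_u'.
  exact: (d_equiv_restrict phi_iso (k := 1) (d := 1) isT (within_dist1_edge w_u')).
subst u'.
apply: (v_unique w _ _ w_neq_v).
- by apply: within_dist1_edge; rewrite e_sym.
- by apply: contraTneq w_u' => ->; rewrite e_irr.
- rewrite -phi_w; apply: (d_equiv_restrict phi_iso (k := 0) (d := 1) isT).
  exact: within_dist_refl.
Qed.
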